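(* Let $\Omega$ be a finite set, let $\mathcal K$ be a finite nonempty set of gambles on $\Omega$, and let $\underline{P}_{\mathcal K}$ be a coherent lower prevision on $\mathcal K$. Let $\mathcal M=\{P: P(f)\ge\underline{P}_{\mathcal K}(f)\ \forall f\in\mathcal K\}$ be its credal set and $\underline{E}(h)=\min_{P\in\mathcal M}P(h)$ its natural extension. For $f\in\mathcal K$ let $\mathcal M_f=\{P\in\mathcal M: P(f)=\underline{E}(f)\}$ and let $\mathcal E_f$ be the set of extreme points of $\mathcal M_f$. Let $\underline{P}$ and $\underline{P}'$ be two coherent lower previsions on the set of all gambles, both agreeing with $\underline{P}_{\mathcal K}$ on $\mathcal K$. Then for every gamble $h$, $$|\underline{P}(h)-\underline{P}'(h)|\le\min_{f\in\mathcal K}\max_{E\in\mathcal E_f}E(h)-\underline{E}(h).$$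
   Context: Gambles are real-valued functions on the finite set $\Omega$. A linear prevision is the expectation functional $P(f)=\sum_{x}p(x)f(x)$ of a probability mass vector $p$. A lower prevision $\underline{P}$ on a set of gambles $\mathcal H$ is coherent if there is a nonempty closed convex set $\mathcal C$ of linear previsions with $\underline{P}(f)=\min_{P\in\mathcal C}P(f)$ for all $f\in\mathcal H$. *)

From mathcomp Require Import all_boot all_order all_algebra.
From mathcomp Require Import all_classical all_reals all_analysis.
Set Implicit Arguments. Unset Strict Implicit. Unset Printing Implicit Defensive.
Import Order.TTheory GRing.Theory Num.Theory numFieldNormedType.Exports.
Local Open Scope classical_set_scope.
Local Open Scope ring_scope.

(* Omega is a finite type T; gambles are functions T -> R.
   A linear prevision is identified with its probability mass vector p : T -> R. *)

Definition gamble (T : finType) (R : realType) := T -> R.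

Definition pmf (T : finType) (R : realType) (p : T -> R) : Prop :=
  (forall x, 0 <= p x) /\ \sum_(x : T) p x = 1.

Definition lprev (T : finType) (R : realType) (p : T -> R) (f : T -> R) : R :=
  \sum_(x : T) p x * f x.

Definition mix (T : finType) (R : realType) (t : R) (p q : T -> R) : T -> R :=
  fun x => t * p x + (1 - t) * q x.

Definition convex_set (T : finType) (R : realType) (C : set (T -> R)) : Prop :=
  forall p q t, C p -> C q -> 0 <= t <= 1 -> C (mix t p q).

(* closedness w.r.t. the product (pointwise = Euclidean, T finite) topology *)
Definition closed_set (T : finType) (R : realType) (C : set (T -> R)) : Prop :=
  @closed (@prod_topology T (fun _ : T => R)) C.

(* lowP is a coherent lower prevision on the set of gambles H:
   there is a nonempty closed convex set C of linear previsions with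
   lowP f = min_{P in C} P(f) for every f in H (the min is attained). *)
Definition coherent_on (T : finType) (R : realType)
    (H : set (T -> R)) (lowP : (T -> R) -> R) : Prop :=
  exists C : set (T -> R),
    [/\ C `<=` @pmf T R, C !=set0, closed_set C, convex_set C &
      forall f, H f ->
        (exists2 p, C p & lprev p f = lowP f) /\
        (forall p, C p -> lowP f <= lprev p f)].

Definition credal (T : finType) (R : realType)
    (K : set (T -> R)) (lowP : (T -> R) -> R) : set (T -> R) :=
  [set p | pmf p /\ forall f, K f -> lowP f <= lprev p f].

(* natural extension E(h) = min_{P in M} P(h) (written as an infimum;
   M is nonempty and compact, so this is the minimum) *)
Definition natext (T : finType) (R : realType)
    (K : set (T -> R)) (lowP : (T -> R) -> R) (h : T -> R) : R :=
  inf [set lprev p h | p in credal K lowP].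

Definition credal_face (T : finType) (R : realType)
    (K : set (T -> R)) (lowP : (T -> R) -> R) (f : T -> R) : set (T -> R) :=
  [set p | credal K lowP p /\ lprev p f = natext K lowP f].

Definition extreme_points (T : finType) (R : realType) (S : set (T -> R))
    : set (T -> R) :=
  [set p | S p /\ forall q r t, S q -> S r -> 0 < t < 1 ->
       p = mix t q r -> q = r].

From Pilot Require Import Defs.
From mathcomp Require Import all_boot all_order all_algebra.
From mathcomp Require Import all_classical all_reals all_analysis.
From mathcomp Require Import lra.
Set Implicit Arguments. Unset Strict Implicit. Unset Printing Implicit Defensive.
Import Order.TTheory GRing.Theory Num.Theory numFieldNormedType.Exports.
Local Open Scope classical_set_scope.
Local Open Scope ring_scope.
Local Notation pmf := Defs.pmf.

(* The credal set C of a coherent extension Q of PK lies in M, so Q h >= E(h).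
   For f in K, C contains a p with p(f) = Q f = PK f = E(f), i.e. p lies in M_f,
   hence Q h <= p(h) <= max_{M_f} h; this maximum is attained at an extreme
   point of the compact set M_f (maximise h, then each coordinate in turn:
   every step cuts out a face, and the last face is a single point). Both
   P h and P' h thus lie in [E(h), min_f max_{E_f} h]. *)

Section LinearPrevision.
Variables (R : realType) (T : finType).
Implicit Types (p q : T -> R) (f : T -> R).

Lemma lprev_mix t p q f :
  lprev (mix t p q) f = t * lprev p f + (1 - t) * lprev q f.
Proof.
rewrite /lprev /mix !mulr_sumr -big_split /=; apply: eq_bigr => x _.
by rewrite mulrDl !mulrA.
Qed.

Lemma lprev_indic1 p x : lprev p \1_[set x] = p x.
Proof.
rewrite /lprev (bigD1 x) //= indicE in_set1 eqxx mulr1 big1 ?addr0 //.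
by move=> y yx; rewrite indicE in_set1 (negbTE yx) mulr0.
Qed.

Lemma lprev_cst1 p : lprev p (fun=> 1) = \sum_x p x.
Proof. by apply: eq_bigr => x _; rewrite mulr1. Qed.

Lemma pmf_ge0_le1 p x : pmf p -> 0 <= p x <= 1.
Proof.
move=> [p0 p1]; rewrite p0 /= -p1 (bigD1 x) //= lerDl.
by apply: sumr_ge0 => y _; exact: p0.
Qed.

Lemma normr_lprev_le p f : pmf p -> `|lprev p f| <= \sum_x `|f x|.
Proof.
move=> pp; apply: le_trans (ler_norm_sum _ _ _) _; apply: ler_sum => x _.
have /andP[px0 px1] := pmf_ge0_le1 x pp.
by rewrite normrM ger0_norm // ler_piMl.
Qed.

Lemma has_lbound_lprev (S : set (T -> R)) f :
  S `<=` @pmf T R -> has_lbound [set lprev p f | p in S].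
Proof.
move=> Spmf; exists (- \sum_x `|f x|) => _ [p Sp <-].
by have /lerNnormlW := normr_lprev_le f (Spmf p Sp).
Qed.

Lemma has_ubound_lprev (S : set (T -> R)) f :
  S `<=` @pmf T R -> has_ubound [set lprev p f | p in S].
Proof.
move=> Spmf; exists (\sum_x `|f x|) => _ [p Sp <-].
by have /ler_normlW := normr_lprev_le f (Spmf p Sp).
Qed.

End LinearPrevision.

Section Compactness.
Variables (R : realType) (T : finType).
Local Notation PT := (@prod_topology T (fun _ : T => R)).

Lemma continuous_lprev (f : T -> R) : continuous (fun p : PT => lprev p f).
Proof.
apply: continuous_big => [|x _]; first exact: add_continuous.
by move=> p; apply: continuousM; [exact: proj_continuous | exact: cst_continuous].
Qed.

Lemma closed_lprev_eq (f : T -> R) c : closed [set p : PT | lprev p f = c].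
Proof.
apply: (@preimage_closed PT R (fun p : PT => lprev p f) _ _ (@closed_eq R c)).
by move=> p _; exact: continuous_lprev.
Qed.

Lemma closed_lprev_ge (f : T -> R) c : closed [set p : PT | c <= lprev p f].
Proof.
apply: (@preimage_closed PT R (fun p : PT => lprev p f) _ _ (@closed_ge R c)).
by move=> p _; exact: continuous_lprev.
Qed.

Lemma closed_pmf : closed (@pmf T R : set PT).
Proof.
have -> : (@pmf T R : set PT) =
    (\bigcap_(x in setT) [set p : PT | 0 <= lprev p \1_[set x]]) `&`
    [set p : PT | lprev p (fun=> 1) = 1].
  apply/seteqP; split => p.
    by move=> [p0 p1]; split=> [x _|]; rewrite /= ?lprev_indic1 ?lprev_cst1.
  move=> [p0 p1]; split=> [x|]; last by rewrite -lprev_cst1.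
  by rewrite -lprev_indic1; exact: p0.
apply: closedI; last exact: closed_lprev_eq.
by apply: closed_bigI => x _; exact: closed_lprev_ge.
Qed.

Lemma compact_pmf : compact (@pmf T R : set PT).
Proof.
apply: (subclosed_compact closed_pmf
  (tychonoff (fun x : T => @segment_compact R 0 1))).
by move=> p pp x; rewrite /= in_itv; exact: pmf_ge0_le1.
Qed.

Lemma compact_credal_face (K : set (T -> R)) PK f :
  compact (credal_face K PK f : set PT).
Proof.
have -> : (credal_face K PK f : set PT) = @pmf T R `&`
    (\bigcap_(g in K) [set p : PT | PK g <= lprev p g]) `&`
    [set p : PT | lprev p f = natext K PK f].
  by apply/seteqP; split=> p [[pp pK] pf].
apply: compact_closedI; last exact: closed_lprev_eq.
apply: compact_closedI compact_pmf _.
by apply: closed_bigI => g _; exact: closed_lprev_ge.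
Qed.

End Compactness.

Section Faces.
Variables (R : realType) (T : finType).
Local Notation PT := (@prod_topology T (fun _ : T => R)).
Implicit Types S F G : set (T -> R).

Definition face S F := F `<=` S /\
  forall p q t, S p -> S q -> 0 < t < 1 -> F (mix t p q) -> F p /\ F q.

Lemma face_refl S : face S S.
Proof. by split. Qed.

Lemma face_trans S F G : face S F -> face F G -> face S G.
Proof.
move=> [FS faceF] [GF faceG]; split=> [p /GF/FS //|p q t Sp Sq t01 Gm].
have [Fp Fq] := faceF p q t Sp Sq t01 (GF _ Gm).
exact: faceG p q t Fp Fq t01 Gm.
Qed.

Lemma face_lprev_argmax S f m : (forall p, S p -> lprev p f <= m) ->
  face S (S `&` [set p | lprev p f = m]).
Proof.
move=> le_m; split=> [p [] //|p q t Sp Sq /andP[t0 t1] [_ /=]].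
rewrite lprev_mix => mix_m; have := le_m p Sp; have := le_m q Sq => le_q le_p.
by split; split=> //=; nra.
Qed.

Lemma extreme_points_face_single S F a :
  face S F -> F a -> (forall p q, F p -> F q -> p = q) -> extreme_points S a.
Proof.
move=> [FS faceF] Fa F_single; split=> [|q r t Sq Sr t01 a_mix]; first exact: FS.
rewrite a_mix in Fa; have [Fq Fr] := faceF q r t Sq Sr t01 Fa.
exact: F_single.
Qed.

Lemma exists_argmax_face (S : set PT) f : compact S -> S !=set0 ->
  exists F : set PT, [/\ compact F, F !=set0, face S F &
    forall p q, S p -> F q -> lprev p f <= lprev q f].
Proof.
move=> cS S0.
have [c] := @compact_EVT_max PT R (fun p => lprev p f) S S0 cS
  (continuous_subspaceT (@continuous_lprev R T f)).
rewrite inE => Sc c_max.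
exists (S `&` [set p | lprev p f = lprev c f]); split.
- exact: compact_closedI cS (@closed_lprev_eq R T f _).
- by exists c.
- by apply: face_lprev_argmax => p Sp; apply: c_max; rewrite inE.
- by move=> p q Sp [_ ->]; apply: c_max; rewrite inE.
Qed.

Lemma exists_face_const_on (s : seq T) (S : set PT) : compact S -> S !=set0 ->
  exists F : set PT, [/\ compact F, F !=set0, face S F &
    {in s, forall x p q, F p -> F q -> p x = q x}].
Proof.
elim: s S => [|x s IH] S cS S0; first by exists S; split=> //; exact: face_refl.
have [F1 [cF1 F10 faceF1 F1_max]] := exists_argmax_face \1_[set x] cS S0.
have [F [cF F0 faceF F_const]] := IH F1 cF1 F10.
exists F; split=> //; first exact: face_trans faceF1 faceF.
move=> y; rewrite in_cons => /orP[/eqP-> {y} | ys] p q Fp Fq; last exact: F_const.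
have F1_F r : F r -> F1 r by apply: faceF.1.
have S_F r : F r -> S r by move=> /F1_F; apply: faceF1.1.
apply/eqP; rewrite eq_le -!(lprev_indic1 _ x) !F1_max //.
all: by [apply: S_F | apply: F1_F].
Qed.

Lemma exists_extreme_argmax (S : set PT) f : compact S -> S !=set0 ->
  exists2 a, extreme_points S a & forall p, S p -> lprev p f <= lprev a f.
Proof.
move=> cS S0; have [F1 [cF1 F10 faceF1 F1_max]] := exists_argmax_face f cS S0.
have [F [_ [a Fa] faceF F_const]] := exists_face_const_on (enum T) cF1 F10.
have F_single p q : F p -> F q -> p = q.
  by move=> Fp Fq; apply: funext => x; apply: F_const; rewrite ?mem_enum.
exists a; last by move=> p Sp; apply: F1_max => //; exact: faceF.1.
exact: extreme_points_face_single (face_trans faceF1 faceF) Fa F_single.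
Qed.

End Faces.

Section NaturalExtension.
Variables (R : realType) (T : finType) (K : set (T -> R)) (PK : (T -> R) -> R).

Lemma natext_coherent f : coherent_on K PK -> K f -> natext K PK f = PK f.
Proof.
move=> [C [Cpmf _ _ _ HC]] Kf; have [[p Cp pf] _] := HC f Kf.
have Mp : credal K PK p by split=> [|g Kg]; [exact: Cpmf | exact: (HC g Kg).2].
apply/eqP; rewrite eq_le; apply/andP; split.
  rewrite -pf; apply: ge_inf; last by exists p.
  by apply: has_lbound_lprev => q [].
by apply: lb_le_inf => [|_ [q [_ qK] <-]]; [exists (lprev p f), p | exact: qK].
Qed.

Variable Q : (T -> R) -> R.
Hypothesis QK : forall f, K f -> Q f = PK f.

Lemma sub_credal (C : set (T -> R)) : C `<=` @pmf T R ->
  (forall f p, K f -> C p -> Q f <= lprev p f) -> C `<=` credal K PK.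
Proof.
move=> Cpmf QC p Cp; split=> [|f Kf]; first exact: Cpmf.
by rewrite -QK //; exact: QC.
Qed.

Lemma natext_le_coherent_ext h : coherent_on setT Q -> natext K PK h <= Q h.
Proof.
move=> [C [Cpmf _ _ _ HC]]; have [p Cp <-] := (HC h I).1.
apply: ge_inf; first by apply: has_lbound_lprev => q [].
by exists p => //; apply: sub_credal Cp => // f q _; exact: (HC f I).2.
Qed.

Lemma coherent_ext_le_sup_extreme h f :
  coherent_on K PK -> coherent_on setT Q -> K f ->
  Q h <= sup [set lprev q h | q in extreme_points (credal_face K PK f)].
Proof.
move=> cohK [C [Cpmf _ _ _ HC]] Kf.
have CM : C `<=` credal K PK by apply: sub_credal => // g q _; exact: (HC g I).2.
have [p Cp pf] := (HC f I).1.
have Mf_p : credal_face K PK f p.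
  by split; [exact: CM | rewrite pf QK // natext_coherent].
have [a Ea a_max] :=
  exists_extreme_argmax h (@compact_credal_face R T K PK f) (ex_intro _ p Mf_p).
apply: le_trans ((HC h I).2 p Cp) (le_trans (a_max p Mf_p) _).
apply: sup_upper_bound; last by exists a.
split; first by exists (lprev a h), a.
by apply: has_ubound_lprev => q [[[]]].
Qed.

End NaturalExtension.

Lemma normrB_le_range (R : realDomainType) (a b x y : R) :
  a <= x <= b -> a <= y <= b -> `|x - y| <= b - a.
Proof.
by move=> /andP[? ?] /andP[? ?]; rewrite ler_norml; apply/andP; split; lra.
Qed.

Theorem corollary6 (R : realType) (T : finType)
    (K : set (T -> R)) (PK P P' : (T -> R) -> R) :
  finite_set K -> K !=set0 ->
  coherent_on K PK ->
  coherent_on setT P -> coherent_on setT P' ->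
  (forall f, K f -> P f = PK f) ->
  (forall f, K f -> P' f = PK f) ->
  forall h : T -> R,
    `| P h - P' h | <=
      inf [set sup [set lprev q h | q in extreme_points (credal_face K PK f)]
          | f in K] - natext K PK h.
Proof.
move=> _ [f0 Kf0] cohK cohP cohP' PKP PKP' h.
set U := inf _.
have le_U Q : coherent_on setT Q -> (forall f, K f -> Q f = PK f) -> Q h <= U.
  move=> cohQ QK; apply: lb_le_inf; first by eexists; exists f0.
  by move=> _ [f Kf <-]; exact: coherent_ext_le_sup_extreme.
by apply: normrB_le_range; rewrite ?natext_le_coherent_ext ?le_U.
Qed.
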